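(* Let $G=(V,E)$ be a $k$-edge-connected graph, $F\subseteq E$, and let $S_1,\dots,S_\ell$ be a natural decomposition of $(V,F)$ into $k/4$-edge-connected components. Let $I\subseteq[\ell]$ be such that $S_I:=\bigcup_{i\in I}S_i$ satisfies $\emptyset\ne S_I\subsetneq V$. If $d_F(S_I)\ge \frac78 d(S_I)$ and $\phi(S_I)<1/8$, then $$\frac{\partial(S_I)}{\sum_{i\in I}\partial(S_i)}\ \ge\ 2\phi(S_I).$$
   Context: Graphs are finite, undirected, unweighted, loopless, possibly with parallel edges; $k$-edge-connected means every cut $(S,\overline S)$, $\emptyset\ne S\subsetneq V$, has at least $k$ edges. For $S\subseteq V$: $\partial(S)$ is the number of edges of $G$ with exactly one endpoint in $S$, $d(S)$ is the sum of $G$-degrees of vertices of $S$, $d_F(S)$ is the sum over $v\in S$ of the number of edges of $F$ incident to $v$, and $\phi(S)=\partial(S)/d(S)$. A natural decomposition of a graph $H=(V,F)$ into $r$-edge-connected components is obtained as follows: start with the partition $\{V\}$; while some part $P$ is such that the induced graph $H[P]$ is not $r$-edge-connected, choose a partition $(P_1,P_2)$ of $P$ into nonempty sets with fewer than $r$ edges of $H[P]$ between $P_1$ and $P_2$, and replace $P$ by $P_1,P_2$; the final parts are $S_1,\dots,S_\ell$. *)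

(* A multigraph G = (V, E): V, E finite types, each edge e
   has endpoints ea e, eb e with ea e != eb e (loopless; parallel edges allowed). *)
From HB Require Import structures.
From mathcomp Require Import all_boot all_order all_algebra.
Set Implicit Arguments. Unset Strict Implicit. Unset Printing Implicit Defensive.
Import Order.TTheory GRing.Theory Num.Theory.

Section Graph.
Variables (V E : finType) (ea eb : E -> V).

Definition incident (v : V) (e : E) : bool := (ea e == v) || (eb e == v).

Definition bdry (S : {set V}) : nat :=
  #|[set e : E | (ea e \in S) != (eb e \in S)]|.

Definition dG (S : {set V}) : nat := \sum_(v in S) #|[set e : E | incident v e]|.

Definition dF (F : {set E}) (S : {set V}) : nat :=
  \sum_(v in S) #|[set e in F | incident v e]|.

Definition phi (S : {set V}) : rat := (bdry S)%:R / (dG S)%:R.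

Definition k_edge_connected (k : nat) : Prop :=
  forall S : {set V}, S != set0 -> S != setT -> k <= bdry S.

Definition cross (F : {set E}) (P1 P2 : {set V}) : nat :=
  #|[set e in F | ((ea e \in P1) && (eb e \in P2)) || ((ea e \in P2) && (eb e \in P1))]|.

Definition split_of (P P1 P2 : {set V}) : bool :=
  [&& P1 != set0, P2 != set0, P1 :&: P2 == set0 & P1 :|: P2 == P].

(* "fewer than r edges" with r = k/4 rational: 4 * cross < k (exact) *)
Definition sparse_split (F : {set E}) (k : nat) (P P1 P2 : {set V}) : bool :=
  split_of P P1 P2 && (4 * cross F P1 P2 < k).

Definition quarter_connected (F : {set E}) (k : nat) (P : {set V}) : Prop :=
  forall P1 P2 : {set V}, split_of P P1 P2 -> k <= 4 * cross F P1 P2.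

Inductive reachable (F : {set E}) (k : nat) : {set {set V}} -> Prop :=
| reach_init : reachable F k [set setT]
| reach_step : forall (Pt : {set {set V}}) (P P1 P2 : {set V}),
    reachable F k Pt -> P \in Pt -> sparse_split F k P P1 P2 ->
    reachable F k ((Pt :\ P) :|: [set P1; P2]).

(* S_1..S_l (injectively indexed) is a natural decomposition of (V,F)
   into k/4-edge-connected components: a final state of the process. *)
Definition natural_decomposition (F : {set E}) (k l : nat) (S : 'I_l -> {set V}) : Prop :=
  injective S /\ reachable F k [set S i | i : 'I_l] /\
  (forall i, quarter_connected F k (S i)).

End Graph.

From HB Require Import structures.
From mathcomp Require Import all_boot all_order all_algebra.
From mathcomp Require Import zify ring lra.
Import Order.TTheory GRing.Theory Num.Theory.
Set Implicit Arguments. Unset Strict Implicit. Unset Printing Implicit Defensive.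

Lemma sum_nat_indicator (T : finType) (A P : pred T) :
  \sum_(x | A x) (P x : nat) = #|[set x | A x && P x]|.
Proof.
rewrite -sum1_card [LHS]big_mkcond [RHS]big_mkcond /=.
by apply: eq_bigr => x _; rewrite inE; case: (A x); case: (P x).
Qed.

Lemma sum_nat_indicatorT (T : finType) (P : pred T) :
  \sum_x (P x : nat) = #|[set x | P x]|.
Proof. by rewrite sum_nat_indicator; apply: eq_card => x; rewrite !inE. Qed.

Lemma sum_indicator_exists (T : finType) (A : {pred T}) (P : pred T) :
  {in A &, forall i j, P i -> P j -> i = j} ->
  \sum_(i in A) (P i : nat) = [exists i in A, P i].
Proof.
move=> Puniq; case: (boolP [exists i in A, P i]) => [/exists_inP [i iA Pi] | noP].
  2: by rewrite big1 // => i iA; case: (boolP (P i)) => // Pi; case/exists_inP: noP; exists i.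
rewrite (bigD1 i) //= Pi big1 // => j /andP [jA ji].
by case: (boolP (P j)) => // Pj; rewrite (Puniq _ _ jA iA Pj Pi) eqxx in ji.
Qed.

Lemma sum_mem_pred1 (T : finType) (A : {pred T}) (a : T) :
  \sum_(x in A) (a == x : nat) = (a \in A).
Proof.
rewrite sum_indicator_exists; last by move=> x y _ _ /eqP <- /eqP.
by congr nat_of_bool; apply/exists_inP/idP => [[x xA /eqP ->] | aA] //; exists a.
Qed.

Lemma addn_neq_and (a b : bool) : (a != b) + 2 * (a && b) = a + b.
Proof. by case: a; case: b. Qed.

Section DisjointFamily.
Variables (I T : finType) (J : {set I}) (A : I -> {set T}).
Hypothesis disjA : {in J &, forall i j, i != j -> [disjoint A i & A j]}.

Lemma disjoint_mem_uniq (x : T) :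
  {in J &, forall i j, x \in A i -> x \in A j -> i = j}.
Proof.
move=> i j iJ jJ xi xj; case: (eqVneq i j) => // /(disjA iJ jJ)/disjointFr/(_ xi).
by rewrite xj.
Qed.

Lemma sum_mem_disjoint (x : T) :
  \sum_(i in J) (x \in A i : nat) = (x \in \bigcup_(i in J) A i).
Proof.
rewrite sum_indicator_exists; last exact: disjoint_mem_uniq.
by congr nat_of_bool; apply/exists_inP/bigcupP => -[i iJ xi]; exists i.
Qed.

Lemma sum_sep_disjoint (x y : T) :
  let U := \bigcup_(i in J) A i in
  \sum_(i in J) ((x \in A i) != (y \in A i) : nat) =
  ((x \in U) != (y \in U)) +
  2 * [&& x \in U, y \in U & ~~ [exists i in J, (x \in A i) && (y \in A i)]].
Proof.
move=> U.
have both : \sum_(i in J) ((x \in A i) && (y \in A i) : nat) =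
            [exists i in J, (x \in A i) && (y \in A i)].
  apply: sum_indicator_exists => i j iJ jJ /andP [xi _] /andP [xj _].
  exact: disjoint_mem_uniq xi xj.
have inU : forall z i, i \in J -> z \in A i -> z \in U.
  by move=> z i iJ zi; apply/bigcupP; exists i.
have bothU : [exists i in J, (x \in A i) && (y \in A i)] -> (x \in U) && (y \in U).
  by case/exists_inP => i iJ /andP [xi yi]; rewrite (inU _ _ iJ xi) (inU _ _ iJ yi).
have := addn_neq_and (x \in U) (y \in U).
rewrite -!sum_mem_disjoint -big_split /=.
under [in RHS]eq_bigr => i _ do rewrite -addn_neq_and.
rewrite big_split /= -big_distrr /= both.
move: bothU; case: [exists _ in _, _]; case: (x \in U); case: (y \in U) => //= _; lia.
Qed.

End DisjointFamily.
Section Splitting.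
Variables (T : finType) (Pt : {set {set T}}) (P P1 P2 : {set T}).

Definition merge_parts (A : {set T}) : {set T} :=
  if (A == P1) || (A == P2) then P else A.

Lemma merge_parts_mem (A : {set T}) :
  P \in Pt -> A \in (Pt :\ P) :|: [set P1; P2] -> merge_parts A \in Pt.
Proof.
rewrite /merge_parts !inE => PPt; case: ifP => // _.
by rewrite orbF => /andP [].
Qed.

Lemma merge_parts_sup (A : {set T}) : P1 :|: P2 = P -> A \subset merge_parts A.
Proof.
rewrite /merge_parts => defP; case: ifP => // /orP [] /eqP ->; rewrite -defP.
  exact: subsetUl.
exact: subsetUr.
Qed.

Lemma merge_parts_collapse (A B : {set T}) :
  A \in (Pt :\ P) :|: [set P1; P2] -> B \in (Pt :\ P) :|: [set P1; P2] ->
  A != B -> merge_parts A = merge_parts B ->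
  (A == P1) && (B == P2) || (A == P2) && (B == P1).
Proof.
rewrite /merge_parts !inE => inA inB nAB.
case: (boolP ((A == P1) || (A == P2))) => hA; case: (boolP ((B == P1) || (B == P2))) => hB.
- case/orP: hA nAB => /eqP->; case/orP: hB => /eqP->; by rewrite ?eqxx ?orbT.
- move=> eBP; case/norP: hB => /negbTE B1 /negbTE B2.
  by move: inB; rewrite B1 B2 !orbF eBP eqxx.

- move=> eAP; case/norP: hA => /negbTE A1 /negbTE A2.
  by move: inA; rewrite A1 A2 !orbF -eAP eqxx.
- by move=> eAB; rewrite eAB eqxx in nAB.
Qed.

End Splitting.

Section Graph.
Variables (V E : finType) (ea eb : E -> V).

Lemma bdry_edge_sum (S : {set V}) :
  bdry ea eb S = \sum_e ((ea e \in S) != (eb e \in S) : nat).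
Proof. by rewrite sum_nat_indicatorT. Qed.

Section Loopless.
Hypothesis loopless : forall e, ea e != eb e.

Lemma dF_edge_sum (A : {set E}) (S : {set V}) :
  dF ea eb A S = \sum_(e in A) ((ea e \in S) + (eb e \in S)).
Proof.
rewrite /dF; under eq_bigr => v _ do rewrite -sum_nat_indicator.
rewrite exchange_big /=; apply: eq_bigr => e _.
have incE v : (incident ea eb v e : nat) = (ea e == v) + (eb e == v).
  rewrite /incident; case: (eqVneq (ea e) v) => [<-|] //=.
  by rewrite eq_sym (negbTE (loopless e)).
by rewrite (eq_bigr _ (fun v _ => incE v)) big_split /= !sum_mem_pred1.
Qed.

Lemma dG_edge_sum (S : {set V}) :
  dG ea eb S = \sum_e ((ea e \in S) + (eb e \in S)).
Proof.
rewrite -(eq_bigl _ _ (in_set (fun _ => true))) -dF_edge_sum.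
by apply: eq_bigr => v _; apply: eq_card => e; rewrite !inE.
Qed.

Lemma dG_split (F : {set E}) (S : {set V}) :
  dG ea eb S = dF ea eb F S + dF ea eb (~: F) S.
Proof.
rewrite dG_edge_sum !dF_edge_sum (bigID (mem F)) /=.
by congr (_ + _); apply: eq_bigl => e; rewrite inE.
Qed.

Lemma bdry_le_dG (S : {set V}) : bdry ea eb S <= dG ea eb S.
Proof.
rewrite bdry_edge_sum dG_edge_sum; apply: leq_sum => e _.
by case: (ea e \in S); case: (eb e \in S).
Qed.

Lemma double_inner_edges_le_dF (A : {set E}) (S : {set V}) :
  2 * #|[set e in A | (ea e \in S) && (eb e \in S)]| <= dF ea eb A S.
Proof.
rewrite dF_edge_sum -sum_nat_indicator big_distrr; apply: leq_sum => e _.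
by case: (ea e \in S); case: (eb e \in S).
Qed.

End Loopless.

Definition edges_between_parts (I : finType) (J : {set I}) (T : I -> {set V}) :
    {set E} :=
  let U := \bigcup_(i in J) T i in
  [set e | [&& ea e \in U, eb e \in U &
             ~~ [exists i in J, (ea e \in T i) && (eb e \in T i)]]].

Lemma sum_bdry_disjoint (I : finType) (J : {set I}) (T : I -> {set V}) :
  {in J &, forall i j, i != j -> [disjoint T i & T j]} ->
  \sum_(i in J) bdry ea eb (T i) =
  bdry ea eb (\bigcup_(i in J) T i) + 2 * #|edges_between_parts J T|.
Proof.
move=> disjT; under eq_bigr => i _ do rewrite bdry_edge_sum.
rewrite exchange_big /= bdry_edge_sum -sum_nat_indicatorT big_distrr -big_split /=.
by apply: eq_bigr => e _; rewrite sum_sep_disjoint.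
Qed.

Definition crossing_edges (F : {set E}) (J : {set {set V}}) : {set E} :=
  [set e in F | [exists A in J, exists B in J, [&& A != B, ea e \in A & eb e \in B]]].

Lemma crossing_edges_image (F : {set E}) (J : {set {set V}}) (g : {set V} -> {set V}) :
  {in J, forall A : {set V}, A \subset g A} ->
  crossing_edges F J \subset crossing_edges F (g @: J) :|:
    [set e in F | [exists A in J, exists B in J,
                    [&& A != B, g A == g B, ea e \in A & eb e \in B]]].
Proof.
move=> gsup; apply/subsetP => e; rewrite !inE => /andP [eF].
case/exists_inP => A AJ /exists_inP [B BJ /and3P [nAB eA eB]].
rewrite eF /=; case: (eqVneq (g A) (g B)) => gAB; apply/orP; [right | left].
  by apply/exists_inP; exists A => //; apply/exists_inP; exists B; rewrite ?nAB ?gAB ?eqxx ?eA ?eB.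
apply/exists_inP; exists (g A); first exact: imset_f.
apply/exists_inP; exists (g B); first exact: imset_f.
by rewrite gAB (subsetP (gsup _ AJ)) // (subsetP (gsup _ BJ)).
Qed.

Section Reachable.
Variables (F : {set E}) (k : nat).

Lemma reachable_neq0 (Pt : {set {set V}}) :
  reachable ea eb F k Pt -> {in Pt, forall A, A != setT -> A != set0}.
Proof.
elim => [|{}Pt P P1 P2 _ IH _ /andP [/and4P [n1 n2 _ _] _]] A.
  by rewrite inE => /eqP ->; rewrite eqxx.
by rewrite !inE => /or3P [/andP [_ /IH] | /eqP -> | /eqP ->].
Qed.

Lemma reachable_trivIset (Pt : {set {set V}}) : reachable ea eb F k Pt -> trivIset Pt.
Proof.
elim => [|{}Pt P P1 P2 _ /trivIsetP tiPt PPt /andP [/and4P [_ _ /eqP d12 /eqP defP] _]].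
  exact: trivIset1.
apply/trivIsetP => A B inA inB nAB.
case: (eqVneq (merge_parts P P1 P2 A) (merge_parts P P1 P2 B)) => [gAB | ngAB].
  have d12' : [disjoint P1 & P2] by rewrite -setI_eq0 d12.
  case/orP: (merge_parts_collapse inA inB nAB gAB) => /andP [/eqP -> /eqP ->] //.
  by rewrite disjoint_sym.
apply: disjointW (merge_parts_sup _ defP) (merge_parts_sup _ defP) _.
exact: tiPt (merge_parts_mem PPt inA) (merge_parts_mem PPt inB) ngAB.
Qed.

Lemma crossing_edges_split (Pt : {set {set V}}) (P P1 P2 : {set V}) :
  (forall J : {set {set V}}, J \subset Pt -> 4 * #|crossing_edges F J| <= (#|J| - 1) * k) ->
  P \in Pt -> sparse_split ea eb F k P P1 P2 ->
  forall J : {set {set V}}, J \subset (Pt :\ P) :|: [set P1; P2] ->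
  4 * #|crossing_edges F J| <= (#|J| - 1) * k.
Proof.
move=> IH PPt /andP [/and4P [n1 _ /eqP d12 /eqP defP] sparse] J sJ.
set g := merge_parts P P1 P2.
set both := (P1 \in J) && (P2 \in J).
have gJ : g @: J \subset Pt.
  by apply/subsetP => _ /imsetP [A AJ ->]; apply: merge_parts_mem (subsetP sJ _ AJ).
have collapsed : #|[set e in F | [exists A in J, exists B in J,
                    [&& A != B, g A == g B, ea e \in A & eb e \in B]]]|
                 <= both * cross ea eb F P1 P2.
  rewrite /cross; case: (boolP both) => [hb | nboth]; last first.
    rewrite mul0n leqn0 cards_eq0; apply/eqP/setP => e; rewrite !inE.
    apply/negbTE/nandP; right; apply/exists_inPn => A AJ.
    apply/exists_inPn => B BJ; apply/negP => /and4P [nAB /eqP gAB _ _].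
    case/orP: (merge_parts_collapse (subsetP sJ _ AJ) (subsetP sJ _ BJ) nAB gAB).
    by case/andP => /eqP eA /eqP eB; move: nboth; rewrite /both -eA -eB AJ BJ.
    by case/andP => /eqP eA /eqP eB; move: nboth; rewrite /both -eA -eB AJ BJ.
  rewrite mul1n; apply: subset_leq_card; apply/subsetP => e; rewrite !inE.
  case/andP => -> /exists_inP [A AJ /exists_inP [B BJ /and4P [nAB /eqP gAB eA eB]]].
  case/orP: (merge_parts_collapse (subsetP sJ _ AJ) (subsetP sJ _ BJ) nAB gAB).
    by case/andP => /eqP eA1 /eqP eB2; rewrite -eA1 -eB2 eA eB.
  by case/andP => /eqP eA2 /eqP eB1; rewrite -eA2 -eB1 eA eB orbT.
have card_g : #|g @: J| - 1 + both <= #|J| - 1.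
  rewrite /both; case: (boolP ((P1 \in J) && (P2 \in J))) => [/andP [P1J P2J] | _].
    have P12 : P1 != P2.
      by apply: contraNneq n1 => e12; rewrite -d12 -e12 setIid.
    have ltJ : #|g @: J| < #|J|.
      rewrite ltn_neqAle leq_imset_card andbT; apply/imset_injP => ginj.
      by move/eqP: P12; apply; apply: ginj; rewrite // /g /merge_parts !eqxx ?orbT.
    have : 0 < #|g @: J| by apply/card_gt0P; exists (g P1); apply: imset_f.
    lia.
  by rewrite addn0 leq_sub2r // leq_imset_card.
have gsup : {in J, forall A : {set V}, A \subset g A} by move=> A _; apply: merge_parts_sup.
have hX := leq_trans (subset_leq_card (crossing_edges_image F gsup)) (leq_card_setU _ _).1.
have hXg := IH _ gJ.
apply: leq_trans (leq_mul card_g (leqnn k)) ; rewrite mulnDl.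
move: collapsed; case: (boolP both) => _; rewrite ?mul1n ?mul0n; move: ((_ - 1) * k) hXg => K hXg; lia.
Qed.

Lemma reachable_crossing_edges (Pt : {set {set V}}) :
  reachable ea eb F k Pt ->
  forall J : {set {set V}}, J \subset Pt -> 4 * #|crossing_edges F J| <= (#|J| - 1) * k.
Proof.
elim => [J sJ | {}Pt P P1 P2 _ IH PPt hsplit]; last exact: crossing_edges_split IH PPt hsplit.
suff -> : crossing_edges F J = set0 by rewrite cards0.
apply/setP => e; rewrite !inE; apply/negbTE/nandP; right.
apply/exists_inPn => A AJ; apply/exists_inPn => B BJ.
by move: (subsetP sJ _ AJ) (subsetP sJ _ BJ); rewrite !inE => /eqP -> /eqP ->; rewrite eqxx.
Qed.

End Reachable.

End Graph.

Local Open Scope ring_scope.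

Lemma ler_double_ratio (R : realFieldType) (b c d : R) :
  0 <= b -> 0 < c -> 2 * c <= d -> 2 * (b / d) <= b / c.
Proof.
move=> b0 c0 cd; have d0 : 0 < d by apply: lt_le_trans cd; rewrite mulr_gt0.
rewrite -subr_ge0 (_ : _ - _ = b * (d - 2 * c) / (c * d)); last first.
  by field; rewrite ?gt_eqF.
by rewrite divr_ge0 ?mulr_ge0 ?subr_ge0 // ltW.
Qed.


Theorem mainTheorem12 (V E : finType) (ea eb : E -> V)
  (loopless : forall e, ea e != eb e) (k : nat)
  (hconn : k_edge_connected ea eb k) (F : {set E}) (l : nat)
  (S : 'I_l -> {set V}) (hdec : natural_decomposition ea eb F k S)
  (I : {set 'I_l}) :
  let SI := \bigcup_(i in I) S i in
  SI != set0 -> SI != setT ->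
  (8 * dF ea eb F SI >= 7 * dG ea eb SI)%N ->
  phi ea eb SI < 1 / 8 ->
  2 * phi ea eb SI <=
    (bdry ea eb SI)%:R / (\sum_(i in I) bdry ea eb (S i))%:R.
Proof.
move=> SI SI0 SIT hdF hphi.
have [injS [reachS _]] := hdec.
have disjS : {in I &, forall i j, i != j -> [disjoint S i & S j]}.
  move=> i j _ _ ij; have /trivIsetP := reachable_trivIset reachS; apply; rewrite ?imset_f //.
  exact: contra_neq (@injS i j) ij.
have bdry_ge_k i : i \in I -> (k <= bdry ea eb (S i))%N.
  move=> iI; have SiT : S i != setT.
    by apply: contraNneq SIT => eT; rewrite eqEsubset subsetT -eT bigcup_sup.
  exact: hconn (reachable_neq0 reachS (imset_f _ _) SiT) SiT.
set C := (\sum_(i in I) bdry ea eb (S i))%N.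
set X := edges_between_parts ea eb I S.
have hC : C = (bdry ea eb SI + 2 * #|X|)%N := sum_bdry_disjoint ea eb disjS.
have hXF : (4 * #|X :&: F| <= C)%N.
  have XF : X :&: F \subset crossing_edges ea eb F (S @: I).
    apply/subsetP => e; rewrite !inE => /andP [/and3P [eaSI ebSI nsame] eF].
    case/bigcupP: eaSI => p pI eap; case/bigcupP: ebSI => q qI ebq.
    rewrite eF; apply/exists_inP; exists (S p); first exact: imset_f.
    apply/exists_inP; exists (S q); first exact: imset_f.
    rewrite eap ebq !andbT; apply: contraNneq nsame => Spq.
    by apply/exists_inP; exists p; rewrite // eap Spq ebq.
  have sSI : S @: I \subset [set S i | i : 'I_l].
    by apply/subsetP => _ /imsetP [i _ ->]; exact: imset_f.
  apply: leq_trans (leq_mul (leqnn 4) (subset_leq_card XF)) _.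
  apply: leq_trans (reachable_crossing_edges reachS sSI) _.
  apply: leq_trans (leq_mul (leq_sub2r 1 (leq_imset_card S I)) (leqnn k)) _.
  apply: leq_trans (leq_mul (leq_subr 1 _) (leqnn k)) _.
  by rewrite -sum_nat_const; apply: leq_sum bdry_ge_k.
have hXN : (2 * #|X :\: F| <= dF ea eb (~: F) SI)%N.
  apply: leq_trans (double_inner_edges_le_dF loopless (~: F) SI).
  rewrite leq_mul2l; apply/orP; right; apply: subset_leq_card; apply/subsetP => e.
  by rewrite !inE => /andP [nF /and3P [-> -> _]]; rewrite nF.
have hX := cardsID F X.
have hD := dG_split loopless F SI.
have hB := bdry_le_dG loopless SI.
rewrite /phi in hphi *; case: (posnP (bdry ea eb SI)) => [-> | Bpos].
  by rewrite !mul0r mulr0.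
have h8 : (8 * bdry ea eb SI < dG ea eb SI)%N.
  move: hphi; rewrite ltr_pdivrMr ?ltr0n; last exact: leq_trans Bpos hB.
  by rewrite -(ltr_nat rat) natrM => ?; lra.
apply: ler_double_ratio; rewrite ?ler0n ?ltr0n -?natrM ?ler_nat; lia.
Qed.
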